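(* Let $\mathbb Q$ be a probability measure on $(\Omega,\mathcal F)$ equivalent to $\mathbb P$, and let $(\mathcal B_n)_{n\in\mathbb N_0}$ be $\sigma$-subfields. Then $\mathcal B_n\to\mathcal B_0$ in the almost-sure sense under $\mathbb P$ if and only if $\mathcal B_n\to\mathcal B_0$ in the almost-sure sense under $\mathbb Q$.
   Context: Let $(\Omega,\mathcal F,\mathbb P)$ be a (not necessarily complete) probability space and $\mathcal N:=\{F\in\mathcal F:\mathbb P(F)=0\}$. A $\sigma$-subfield is a sub-$\sigma$-field $\mathcal A\subset\mathcal F$ with $\mathcal A=\sigma(\mathcal A\cup\mathcal N)$. For a probability measure $\mathbb R\sim\mathbb P$ and a $\sigma$-subfield $\mathcal A$, $\mathbb R_{\mathcal A}f:=\mathbb E^{\mathbb R}[f\mid\mathcal A]$. We say $\mathcal B_n\to\mathcal B_0$ in the almost-sure sense under $\mathbb R$ if for every $f\in L^1(\mathbb R)$, $\mathbb R$-a.s. $\mathbb R_{\mathcal B_n}f\to\mathbb R_{\mathcal B_0}f$ as $n\to\infty$. *)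

From HB Require Import structures.
From mathcomp Require Import all_boot all_order all_algebra.
From mathcomp Require Import all_classical all_reals all_analysis.
Set Implicit Arguments. Unset Strict Implicit. Unset Printing Implicit Defensive.
Import Order.TTheory GRing.Theory Num.Theory numFieldNormedType.Exports.
Local Open Scope classical_set_scope.
Local Open Scope ring_scope.

Definition null_sets d (T : measurableType d) (R : realType)
    (P : {measure set T -> \bar R}) : set (set T) :=
  [set N | measurable N /\ P N = 0%E].

Definition equiv_measure d (T : measurableType d) (R : realType)
    (P Q : {measure set T -> \bar R}) : Prop :=
  forall A : set T, measurable A -> (P A = 0%E <-> Q A = 0%E).

Definition sigma_subfield d (T : measurableType d) (R : realType)
    (P : {measure set T -> \bar R}) (A : set (set T)) : Prop :=
  [/\ sigma_algebra setT A, A `<=` measurable & A = <<s A `|` null_sets P >>].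

Definition measurable_wrt d (T : measurableType d) (R : realType)
    (A : set (set T)) (g : T -> R) : Prop :=
  forall B : set R, measurable B -> A (g @^-1` B).

Definition is_cond_exp d (T : measurableType d) (R : realType)
    (Rm : {measure set T -> \bar R}) (A : set (set T)) (f g : T -> R) : Prop :=
  [/\ measurable_wrt A g, Rm.-integrable setT (EFin \o g) &
      forall B, A B -> (\int[Rm]_(x in B) (g x)%:E = \int[Rm]_(x in B) (f x)%:E)%E].

(* B_n -> B_0 in the almost-sure sense under Rm: for every f in L^1(Rm),
   (any versions of) the conditional expectations converge Rm-a.s. *)
Definition as_conv d (T : measurableType d) (R : realType)
    (Rm : {measure set T -> \bar R}) (B : nat -> set (set T)) : Prop :=
  forall f : T -> R, measurable_fun setT f -> Rm.-integrable setT (EFin \o f) ->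
  forall g : nat -> T -> R, (forall n, is_cond_exp Rm (B n) f (g n)) ->
  \forall x \ae Rm, (g n x) @[n --> \oo] --> g 0%N x.

From HB Require Import structures.
From mathcomp Require Import all_boot all_order all_algebra.
From mathcomp Require Import all_classical all_reals all_analysis.
From mathcomp Require Import measurable_realfun.
Set Implicit Arguments. Unset Strict Implicit. Unset Printing Implicit Defensive.
Import Order.TTheory GRing.Theory Num.Theory numFieldNormedType.Exports.
Local Open Scope classical_set_scope.
Local Open Scope ring_scope.

(* Bayes' formula. Let z = dQ/dP, let k_n be the density of Q with respect to
   P on B_n and g_n = E^Q[f | B_n]. Then k_n = E^P[z | B_n] and
   g_n k_n = E^P[f z | B_n], where z and f z are P-integrable. Convergence
   under P thus gives g_n k_n -> g_0 k_0 and k_n -> k_0 P-a.s.; since P << Q,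
   k_0 vanishes only on a P-null set, so g_n -> g_0 P-a.s., hence Q-a.s.
   because Q << P. The converse is the same argument with P and Q swapped. *)

Section Radon_Nikodym_integral.
Context d (T : measurableType d) (R : realType).
Variables (nu : {finite_measure set T -> \bar R})
          (mu : {sigma_finite_measure set T -> \bar R}).
Hypothesis numu : nu `<< mu.
Local Notation g := (Radon_Nikodym_SigmaFinite.f nu mu).
Local Open Scope ereal_scope.

Let mg : measurable_fun setT g.
Proof. exact: measurable_int (Radon_Nikodym_SigmaFinite.f_integrable numu). Qed.

Lemma integrable_mul_Radon_Nikodym (f : T -> \bar R) :
  nu.-integrable setT f -> mu.-integrable setT (f \* g).
Proof.
move=> intf; have mf := measurable_int nu intf.
apply/integrableP; split; first exact: emeasurable_funM.
rewrite (eq_integral (fun x => `|f x| * g x)); last first.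
  move=> x _; rewrite /= abseM.
  by rewrite (gee0_abs (Radon_Nikodym_SigmaFinite.f_ge0 numu x)).
rewrite Radon_Nikodym_SigmaFinite.change_of_variables //; last first.
  exact: measurableT_comp.
by case/integrableP: intf.
Qed.

Lemma integral_mul_Radon_Nikodym (f : T -> \bar R) E : measurable E ->
  nu.-integrable setT f -> \int[mu]_(x in E) (f x * g x) = \int[nu]_(x in E) f x.
Proof.
(* The library's signed change of variables uses the charge version of the
   derivative, which agrees with [g] almost everywhere. *)
move=> mE intf; have mf := measurable_int nu intf.
rewrite -(Radon_Nikodym_change_of_variables numu mE); last first.
  exact: integrableS intf.
apply: ae_eq_integral => //.
- by apply: emeasurable_funM; exact: measurable_funTS.
- apply: emeasurable_funM; first exact: measurable_funTS.
  exact: measurable_funTS.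
- by apply: ae_eqe_mul2l; exact: ae_eq_Radon_Nikodym_SigmaFinite.
Qed.

End Radon_Nikodym_integral.

Section measurable_wrt.
Context d (T : measurableType d) (R : realType).
Implicit Types h : T -> R.

Lemma measurable_wrtT h : measurable_wrt measurable h <-> measurable_fun setT h.
Proof.
split=> [mh _ B mB|mh B mB]; first by rewrite setTI; exact: mh.
by have := mh measurableT B mB; rewrite setTI.
Qed.

Variable G : set (set T).
Hypothesis sG : sigma_algebra setT G.

Lemma measurable_wrtP h :
  measurable_wrt G h <-> measurable_fun [set: g_sigma_algebraType G] h.
Proof.
have GE : <<s G >> = G by exact: sigma_algebra_id.
split=> [mh _ B mB|mh B mB].
  by rewrite setTI; change (<<s G >> (h @^-1` B)); rewrite GE; exact: mh.
have := mh measurableT B mB; rewrite setTI.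
by change (<<s G >> (h @^-1` B) -> G (h @^-1` B)); rewrite GE.
Qed.

Lemma measurable_wrt_cst (c : R) : measurable_wrt G (cst c).
Proof. exact/measurable_wrtP/measurable_cst. Qed.

Lemma measurable_wrtM h1 h2 :
  measurable_wrt G h1 -> measurable_wrt G h2 -> measurable_wrt G (h1 \* h2).
Proof.
move=> /measurable_wrtP m1 /measurable_wrtP m2.
exact/measurable_wrtP/measurable_funM.
Qed.

End measurable_wrt.

(* [k] is a real-valued version of the Radon-Nikodym derivative d(Q|G)/d(P|G). *)
Definition density_wrt d (T : measurableType d) (R : realType)
    (P Q : {measure set T -> \bar R}) (G : set (set T)) (k : T -> R) : Prop :=
  measurable_wrt G k /\
  forall h : T -> R, measurable_wrt G h -> Q.-integrable setT (EFin \o h) ->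
    P.-integrable setT (EFin \o (h \* k)) /\
    forall A, G A ->
      (\int[P]_(x in A) (h x * k x)%:E = \int[Q]_(x in A) (h x)%:E)%E.

Section restriction.
Context d (T : measurableType d) (R : realType) (G : set (set T)).
Hypotheses (sG : sigma_algebra setT G) (GF : G `<=` measurable).
Local Notation TG := (g_sigma_algebraType G).
Local Open Scope ereal_scope.

Let GE : <<s G >> = G. Proof. exact: sigma_algebra_id. Qed.

Let measurable_id : measurable_fun setT (id : T -> TG).
Proof. by move=> _ A GA; rewrite setTI; apply: GF; rewrite -GE. Qed.

Let idG : {mfun T >-> TG} := MeasurableFun.Pack
  (MeasurableFun.Class (isMeasurableFun.Build _ _ _ _ _ measurable_id)).

(* [distribution mu idG] is the restriction of [mu] to [G], seen on [TG]. *)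
Lemma integrable_restrictionP (mu : probability T R) (F : TG -> \bar R) :
  measurable_fun setT F ->
  (distribution mu idG).-integrable setT F <-> mu.-integrable setT F.
Proof.
move=> mF.
have mFT : measurable_fun [set: T] F := measurableT_comp mF measurable_id.
split=> [|iF]; last exact: (integrable_pushforward measurable_id).
case/integrableP => _ iF; apply/integrableP; split => //.
rewrite ge0_integral_pushforward // in iF; exact: measurableT_comp.
Qed.

Lemma integral_restriction (mu : probability T R) (F : TG -> \bar R) A :
  measurable_fun setT F -> mu.-integrable setT F -> G A ->
  \int[distribution mu idG]_(x in A) F x = \int[mu]_(x in A) F x.
Proof.
move=> mF iF GA; have mA : measurable (A : set TG) by rewrite /measurable /= GE.
by rewrite integral_pushforward //; apply: integrableS iF => //; exact: GF.
Qed.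

Lemma exists_density_wrt (P Q : probability T R) :
  content_dominates P Q -> exists k, density_wrt P Q G k.
Proof.
move=> PQ; pose PG := distribution P idG; pose QG := distribution Q idG.
have QPG : QG `<< PG.
  apply/null_content_dominatesP => A mA PGA0.
  have GA : G A by rewrite -GE.
  exact: PQ (GF GA) PGA0.
pose Z := Radon_Nikodym_SigmaFinite.f QG PG.
have ZE x : (fine (Z x))%:E = Z x.
  by rewrite fineK //; exact: Radon_Nikodym_SigmaFinite.f_fin_num.
have mZ : measurable_fun setT Z.
  exact: measurable_int (Radon_Nikodym_SigmaFinite.f_integrable QPG).
exists (fine \o Z); split.
  by apply/measurable_wrtP => //; exact: measurableT_comp.
move=> h /(measurable_wrtP sG) mh iQh.
have mH : measurable_fun [set: TG] (EFin \o h) by exact/measurable_EFinP.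
have hZE : EFin \o (h \* (fine \o Z))%R = (EFin \o h) \* Z.
  by apply/funext => x; rewrite /= EFinM ZE.
have iQGh : QG.-integrable setT (EFin \o h) by exact/integrable_restrictionP.
have iPhZ : P.-integrable setT ((EFin \o h) \* Z).
  apply/integrable_restrictionP; first exact: emeasurable_funM.
  exact: integrable_mul_Radon_Nikodym.
rewrite hZE; split => // A GA.
have mA : measurable (A : set TG) by rewrite /measurable /= GE.
under eq_integral do rewrite EFinM ZE.
transitivity (\int[PG]_(x in A) ((EFin \o h) \* Z) x).
  by rewrite integral_restriction //; exact: emeasurable_funM.
by rewrite (integral_mul_Radon_Nikodym QPG mA iQGh) integral_restriction.
Qed.

End restriction.

Section density_wrt_lemmas.
Context d (T : measurableType d) (R : realType) (P Q : probability T R).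
Variables (G : set (set T)) (k : T -> R).
Hypotheses (sG : sigma_algebra setT G) (GF : G `<=` measurable).
Hypothesis Gk : density_wrt P Q G k.
Local Open Scope ereal_scope.

Let density_wrt_one :
  P.-integrable setT (EFin \o (cst 1%R \* k)%R) /\
  forall A, G A -> \int[P]_(x in A) (1 * k x)%:E = \int[Q]_(x in A) 1.
Proof.
apply: Gk.2; first exact: measurable_wrt_cst.
exact: finite_measure_integrable_cst.
Qed.

Lemma density_wrt_integrable : P.-integrable setT (EFin \o k).
Proof.
apply: (eq_integrable measurableT _ _ _ density_wrt_one.1) => x _ /=.
by rewrite mul1r.
Qed.

Lemma density_wrt_integral A : G A -> \int[P]_(x in A) (k x)%:E = Q A.
Proof.
move=> GA; rewrite -[RHS]mul1e -integral_cst; last exact: GF.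
by rewrite -(density_wrt_one.2 A GA); apply: eq_integral => x _; rewrite mul1r.
Qed.

Lemma density_wrt_ae_neq0 : content_dominates Q P -> \forall x \ae P, k x != 0%R.
Proof.
move=> QP; pose S := k @^-1` [set 0%R].
have GS : G S by exact: Gk.1.
have QS0 : Q S = 0 by rewrite -density_wrt_integral // integral0_eq // => x ->.
exists S; split; [exact: GF | exact: QP (GF GS) QS0 |].
by move=> x /negP; rewrite negbK => /eqP.
Qed.

End density_wrt_lemmas.

Section change_of_measure.
Context d (T : measurableType d) (R : realType) (P Q : probability T R).
Variables (G : set (set T)) (k z : T -> R).
Hypotheses (sG : sigma_algebra setT G) (GF : G `<=` measurable).
Hypotheses (Gk : density_wrt P Q G k) (Fz : density_wrt P Q measurable z).
Local Open Scope ereal_scope.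

Lemma density_wrt_cond_exp : is_cond_exp P G z k.
Proof.
split; [exact: Gk.1 | exact: density_wrt_integrable Gk |].
move=> A GA; rewrite (density_wrt_integral sG GF Gk GA).
have sF := @sigma_algebra_measurable _ T.
by rewrite (density_wrt_integral sF (@subset_refl _ _) Fz) //; exact: GF.
Qed.

Lemma cond_exp_change_measure f g : measurable_fun setT f ->
  Q.-integrable setT (EFin \o f) ->
  is_cond_exp Q G f g -> is_cond_exp P G (f \* z)%R (g \* k)%R.
Proof.
move=> mf iQf [mg iQg gE].
have [iPgk gkE] := Gk.2 g mg iQg.
have [_ fzE] := Fz.2 f (proj2 (measurable_wrtT f) mf) iQf.
split => //; first exact: (measurable_wrtM sG mg Gk.1).
by move=> A GA; rewrite gkE // gE // fzE //; exact: GF.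
Qed.

End change_of_measure.

Lemma cvg_mulr_cancel (R : numFieldType) (u v : R ^nat) (a b : R) : b != 0 ->
  v @ \oo --> b -> (u n * v n) @[n --> \oo] --> a * b -> u @ \oo --> a.
Proof.
move=> b0 vb uvab; have -> : a = a * b * b^-1 by rewrite mulfK.
apply: cvg_trans (cvgM uvab (cvgV b0 vb)); apply: near_eq_cvg.
near=> n; rewrite /= mulfK //; near: n; exact: (cvgr_neq0 b vb b0).
Unshelve. all: by end_near.
Qed.

Lemma as_conv_change_measure d (T : measurableType d) (R : realType)
    (P Q : probability T R) (B : nat -> set (set T)) :
  content_dominates P Q -> content_dominates Q P ->
  (forall n, sigma_algebra setT (B n)) -> (forall n, B n `<=` measurable) ->
  as_conv P B -> as_conv Q B.
Proof.
move=> PQ QP sB BF asP f mf iQf g gE.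
have sF := @sigma_algebra_measurable _ T.
have [z Fz] := exists_density_wrt sF (@subset_refl _ _) PQ.
have [k Bk] := choice (fun n => exists_density_wrt (sB n) (BF n) PQ).
have mz : measurable_fun setT z by exact/measurable_wrtT/Fz.1.
have [iPfz _] := Fz.2 f (proj2 (measurable_wrtT f) mf) iQf.
have gk_cvg := asP _ (measurable_funM mf mz) iPfz _
  (fun n => cond_exp_change_measure (sB n) (BF n) (Bk n) Fz mf iQf (gE n)).
have k_cvg := asP _ mz (density_wrt_integrable sF Fz) _
  (fun n => density_wrt_cond_exp (sB n) (BF n) (Bk n) Fz).
have k0_neq0 := density_wrt_ae_neq0 (sB 0%N) (BF 0%N) (Bk 0%N) QP.
have [N [mN PN0 gN]] : \forall x \ae P, g n x @[n --> \oo] --> g 0%N x.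
  apply: filterS3 gk_cvg k_cvg k0_neq0 => x gkx kx k0x.
  exact: (cvg_mulr_cancel (u := fun n => g n x) k0x kx gkx).
by exists N; split => //; exact: PQ.
Qed.

Theorem proposition4p6 (d : measure_display) (T : measurableType d)
  (R : realType) (P Q : probability T R) (B : nat -> set (set T)) :
  equiv_measure P Q ->
  (forall n, sigma_subfield P (B n)) ->
  (as_conv P B <-> as_conv Q B).
Proof.
move=> PQ Bsub.
have sB n : sigma_algebra setT (B n) by case: (Bsub n).
have BF n : B n `<=` measurable by case: (Bsub n).
have PdomQ : content_dominates P Q by move=> A mA /(PQ A mA).
have QdomP : content_dominates Q P by move=> A mA /(PQ A mA).
by split; apply: as_conv_change_measure.
Qed.
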